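(* For any $\mathcal{H}\subseteq\{0,1\}^{\mathcal{X}}$ with $\operatorname{L}(\mathcal{H})=1$ and any time horizon $T$, there exists a deterministic online learner which, under apple tasting feedback, makes at most $1+2\sqrt{T}$ mistakes on any sequence $(x_1,y_1),\dots,(x_T,y_T)$ realizable by $\mathcal{H}$ (i.e. $y_t=h(x_t)$ for all $t$ for some $h\in\mathcal{H}$).
   Context: Apple tasting feedback: in each round the learner receives $x_t\in\mathcal{X}$, predicts $\hat y_t\in\{0,1\}$, and observes the true label $y_t$ only if $\hat y_t=1$; a mistake is a round with $\hat y_t\ne y_t$. The Littlestone dimension $\operatorname{L}(\mathcal{H})$ is the largest $d$ such that there is a complete binary tree of depth $d$ with internal nodes labeled by instances of $\mathcal{X}$ that is shattered by $\mathcal{H}$: for every root-to-leaf path $\sigma\in\{0,1\}^d$ (with $x_i$ the instance at the node reached by prefix $\sigma_1\dots\sigma_{i-1}$) some $h\in\mathcal{H}$ satisfies $h(x_i)=\sigma_i$ for all $i$. *)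

From Stdlib Require Import List Arith Reals.
Import ListNotations.

Definition hclass (X : Type) := (X -> bool) -> Prop.

(* A (complete) binary tree with internal nodes labeled by instances: the node
   reached by the prefix p (a list of booleans, root = []) is labeled tr p. *)
Definition ltree (X : Type) := list bool -> X.

Definition shatters {X : Type} (H : hclass X) (d : nat) (tr : ltree X) : Prop :=
  forall sigma : list bool, length sigma = d ->
    exists h, H h /\
      forall i, i < d -> h (tr (firstn i sigma)) = nth i sigma false.

Definition ldim_eq {X : Type} (H : hclass X) (d : nat) : Prop :=
  (exists tr : ltree X, shatters H d tr) /\
  (forall d' (tr : ltree X), shatters H d' tr -> d' <= d).

(* Apple-tasting feedback history: for each past round, the instance together
   with Some y if the learner predicted 1 (label revealed), None if it
   predicted 0 (label not revealed). *)
Definition history (X : Type) := list (X * option bool).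

Definition learner (X : Type) := history X -> X -> bool.

Fixpoint mistakes_from {X : Type} (A : learner X) (hist : history X)
    (s : list (X * bool)) : nat :=
  match s with
  | [] => 0
  | (x, y) :: s' =>
      let yh := A hist x in
      (if Bool.eqb yh y then 0 else 1) +
      mistakes_from A (hist ++ [(x, if yh then Some y else None)]) s'
  end.

Definition mistakes {X : Type} (A : learner X) (s : list (X * bool)) : nat :=
  mistakes_from A [] s.

Definition realizable {X : Type} (H : hclass X) (s : list (X * bool)) : Prop :=
  exists h, H h /\ forall p, In p s -> snd p = h (fst p).

(** The learner keeps the version space V of hypotheses consistent with the
    revealed labels.  On x it predicts 0 if no h in V has h x = 1, and 1 if
    at most one h in V has h x = 0.  Otherwise L(H) = 1 leaves a unique h in
    V with h x = 1, and the learner trusts it (predicts 1) only once h has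
    been overruled, i.e. has said 1 in a round where the learner said 0, at
    least k = floor (sqrt T) times.  In each hidden round at most one
    hypothesis of V is overruled, so the overrule counts sum to at most the
    number N of hidden rounds.  The false negatives are exactly the A <= k
    overrules of the target, and all false positives but one refute a
    trusted hypothesis overruled k times.  With E such refutations,
    A + k E <= N <= T - E, hence (k+1)(A+E) <= k^2 + T and A + E <= 2 sqrt T. *)

From Stdlib Require Import List Arith Reals.
From Stdlib Require Import Lia Lra Classical ClassicalEpsilon FunctionalExtensionality.
Import ListNotations.

Definition holds (P : Prop) : bool :=
  if excluded_middle_informative P then true else false.

Lemma holdsP (P : Prop) : Bool.reflect P (holds P).
Proof. unfold holds; destruct (excluded_middle_informative P); constructor; auto. Qed.

Definition subsingleton {A : Type} (P : A -> Prop) : Prop :=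
  forall a b, P a -> P b -> a = b.

Lemma list_sum_map_add {A : Type} (F G : A -> nat) (l : list A) :
  list_sum (map (fun a => F a + G a) l) = list_sum (map F l) + list_sum (map G l).
Proof. induction l as [|a l IH]; simpl in *; lia. Qed.

Lemma list_sum_map_ge {A : Type} (k : nat) (F : A -> nat) (l : list A) :
  (forall a, In a l -> k <= F a) -> k * length l <= list_sum (map F l).
Proof.
  induction l as [|a l IH]; intros HF; simpl; [lia|].
  assert (k <= F a) by (apply HF; left; reflexivity).
  assert (k * length l <= list_sum (map F l)) by (apply IH; intros b Hb; apply HF; right; exact Hb).
  lia.
Qed.

Lemma list_sum_indicator_le_1 {A : Type} (P : A -> Prop) (l : list A) :
  NoDup l -> subsingleton P -> list_sum (map (fun a => Nat.b2n (holds (P a))) l) <= 1.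
Proof.
  intros Hl HP; induction Hl as [|a l Ha Hl IH]; simpl; [lia|].
  destruct (holdsP (P a)) as [Pa|]; simpl; [|exact IH].
  enough (list_sum (map (fun b => Nat.b2n (holds (P b))) l) = 0) by lia.
  clear IH Hl; induction l as [|b l IHl]; simpl; [reflexivity|].
  destruct (holdsP (P b)) as [Pb|]; simpl.
  - rewrite (HP a b Pa Pb) in Ha; simpl in Ha; tauto.
  - apply IHl; simpl in Ha; tauto.
Qed.

Lemma functions_differ {A B : Type} (f g : A -> B) : f <> g -> exists a, f a <> g a.
Proof.
  intros Hfg; apply not_all_ex_not; intros Heq.
  apply Hfg, functional_extensionality, Heq.
Qed.

Lemma le_two_sqrt T n :
  (Nat.sqrt T + 1) * n <= Nat.sqrt T * Nat.sqrt T + T -> (INR n <= 2 * sqrt (INR T))%R.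
Proof.
  intros Hn; destruct (Nat.sqrt_spec T (Nat.le_0_l T)) as [Hlo Hhi].
  set (k := Nat.sqrt T) in *; set (r := sqrt (INR T)).
  assert (Hr : (r * r = INR T)%R) by (apply sqrt_sqrt, pos_INR).
  assert (Hkr : (INR k <= r)%R).
  { rewrite <- (sqrt_square (INR k)) by apply pos_INR.
    apply sqrt_le_1_alt; rewrite <- mult_INR; apply le_INR, Hlo. }
  assert (Hrk : (r < INR k + 1)%R).
  { rewrite <- (sqrt_square (INR k + 1)) by (pose proof (pos_INR k); lra).
    apply sqrt_lt_1_alt; split; [apply pos_INR|].
    replace (INR k + 1)%R with (INR (S k)) by (rewrite S_INR; reflexivity).
    rewrite <- mult_INR; apply lt_INR, Hhi. }
  apply le_INR in Hn; rewrite mult_INR, !plus_INR, mult_INR in Hn; simpl in Hn.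
  pose proof (pos_INR k).
  (* 2 r (k + 1) - (k^2 + r^2) = 2 r - (r - k)^2 >= 0 since 0 <= r - k < 1. *)
  apply Rmult_le_reg_l with (INR k + 1)%R; nra.
Qed.

Section LittlestoneOne.

Variables (X : Type) (H : hclass X).
Hypothesis ldim_le1 : forall d tr, shatters H d tr -> d <= 1.

Definition tree2 (x y z : X) : ltree X :=
  fun p => match p with [] => x | true :: _ => y | false :: _ => z end.

Lemma shatters_tree2 x y z f1 f2 g1 g2 :
  H f1 -> H f2 -> H g1 -> H g2 ->
  f1 x = true -> f2 x = true -> g1 x = false -> g2 x = false ->
  f1 y <> f2 y -> g1 z <> g2 z -> shatters H 2 (tree2 x y z).
Proof.
  intros Hf1 Hf2 Hg1 Hg2 f1x f2x g1x g2x Hy Hz sigma Hsigma.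
  destruct sigma as [|b0 [|b1 [|b2 rest]]]; simpl in Hsigma; try lia.
  assert (Hpick : forall (h1 h2 : X -> bool) w, h1 w <> h2 w -> h1 w = b1 \/ h2 w = b1).
  { intros h1 h2 w Hw; destruct (h1 w), (h2 w), b1; auto; congruence. }
  destruct b0.
  - destruct (Hpick f1 f2 y Hy) as [Hb|Hb];
      [exists f1|exists f2]; split; auto; intros [|[|i]] Hi; simpl; auto; lia.
  - destruct (Hpick g1 g2 z Hz) as [Hb|Hb];
      [exists g1|exists g2]; split; auto; intros [|[|i]] Hi; simpl; auto; lia.
Qed.

(* Two distinct hypotheses on each side of x would shatter a tree of depth 2. *)
Lemma positives_subsingleton (V : (X -> bool) -> Prop) x :
  (forall g, V g -> H g) ->
  ~ subsingleton (fun g => V g /\ g x = false) ->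
  subsingleton (fun g => V g /\ g x = true).
Proof.
  intros HV Hneg f1 f2 [Vf1 f1x] [Vf2 f2x]; apply NNPP; intros Hf.
  apply Hneg; intros g1 g2 [Vg1 g1x] [Vg2 g2x]; apply NNPP; intros Hg.
  destruct (functions_differ f1 f2 Hf) as [y Hy].
  destruct (functions_differ g1 g2 Hg) as [z Hz].
  enough (2 <= 1) by lia.
  apply (ldim_le1 2 (tree2 x y z)), shatters_tree2 with f1 f2 g1 g2; auto.
Qed.

End LittlestoneOne.

Section Runs.

Variables (X : Type) (A : learner X) (target : X -> bool).

Inductive generated : history X -> Prop :=
| generated_nil : generated []
| generated_snoc hist x : generated hist ->
    generated (hist ++ [(x, if A hist x then Some (target x) else None)]).

Definition false_negative (e : X * option bool) : bool :=
  match snd e with None => target (fst e) | Some _ => false end.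

Definition false_positive (e : X * option bool) : bool :=
  match snd e with Some false => true | _ => false end.

Definition hidden (e : X * option bool) : bool :=
  match snd e with None => true | Some _ => false end.

Lemma hidden_false_positive_le (hist : history X) :
  length (filter hidden hist) + length (filter false_positive hist) <= length hist.
Proof.
  induction hist as [|[x [[|]|]] hist IH]; simpl; lia.
Qed.

Lemma mistakes_from_generated hist s :
  generated hist -> (forall p, In p s -> snd p = target (fst p)) ->
  exists F, generated F /\ length F = length hist + length s /\
    mistakes_from A hist s + length (filter false_negative hist)
      + length (filter false_positive hist) =
    length (filter false_negative F) + length (filter false_positive F).
Proof.
  revert hist; induction s as [|[x y] s IH]; intros hist Hgen Hs; simpl.
  - exists hist; repeat split; auto; lia.
  - assert (Hy : y = target x) by exact (Hs (x, y) (or_introl eq_refl)); subst y.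
    destruct (IH (hist ++ [(x, if A hist x then Some (target x) else None)]))
      as [F [HF [Hlen Hmis]]].
    + constructor; exact Hgen.
    + intros p Hp; apply Hs; right; exact Hp.
    + exists F; split; [exact HF|]; split.
      * rewrite Hlen, length_app; simpl; lia.
      * rewrite <- Hmis, !filter_app, !length_app.
        simpl; destruct (A hist x); cbn [false_negative false_positive fst snd];
          destruct (target x); simpl; lia.
Qed.

End Runs.

Section Learner.

Variables (X : Type) (H : hclass X) (k : nat).

Definition consistent (hist : history X) (g : X -> bool) : Prop :=
  H g /\ forall x y, In (x, Some y) hist -> g x = y.

Fixpoint overruled_from (f : X -> bool) (past hist : history X) : nat :=
  match hist with
  | [] => 0
  | (x, o) :: rest =>
      match o with
      | None => Nat.b2n (holds (consistent past f /\ f x = true))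
      | Some _ => 0
      end + overruled_from f (past ++ [(x, o)]) rest
  end.

Definition overruled (f : X -> bool) (hist : history X) : nat := overruled_from f [] hist.

Definition predicts_one (hist : history X) (x : X) : Prop :=
  exists f, consistent hist f /\ f x = true /\
    (subsingleton (fun g => consistent hist g /\ g x = false) \/ k <= overruled f hist).

Definition trusting_learner : learner X := fun hist x => holds (predicts_one hist x).

Lemma consistent_snoc_revealed hist x y g :
  consistent (hist ++ [(x, Some y)]) g <-> consistent hist g /\ g x = y.
Proof.
  unfold consistent; split.
  - intros [Hg Hc]; repeat split; auto.
    + intros x' y' Hin; apply Hc, in_or_app; left; exact Hin.
    + apply Hc, in_or_app; right; left; reflexivity.
  - intros [[Hg Hc] Hx]; split; [exact Hg|].
    intros x' y' Hin; apply in_app_or in Hin as [Hin|[Heq|[]]]; auto.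
    injection Heq as <- <-; exact Hx.
Qed.

Lemma consistent_snoc_hidden hist x g :
  consistent (hist ++ [(x, None)]) g <-> consistent hist g.
Proof.
  unfold consistent; split; intros [Hg Hc]; split; auto; intros x' y' Hin.
  - apply Hc, in_or_app; left; exact Hin.
  - apply in_app_or in Hin as [Hin|[Heq|[]]]; [auto|discriminate].
Qed.

Lemma consistent_of_snoc hist x o g : consistent (hist ++ [(x, o)]) g -> consistent hist g.
Proof.
  destruct o; [rewrite consistent_snoc_revealed | rewrite consistent_snoc_hidden]; tauto.
Qed.

Lemma overruled_from_snoc f past hist x o :
  overruled_from f past (hist ++ [(x, o)]) =
  overruled_from f past hist +
  match o with
  | None => Nat.b2n (holds (consistent (past ++ hist) f /\ f x = true))
  | Some _ => 0
  end.
Proof.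
  revert past; induction hist as [|[x' o'] hist IH]; intros past; simpl.
  - rewrite app_nil_r; lia.
  - rewrite IH, <- app_assoc; simpl; lia.
Qed.

Lemma overruled_snoc_revealed f hist x y :
  overruled f (hist ++ [(x, Some y)]) = overruled f hist.
Proof. unfold overruled; rewrite overruled_from_snoc; lia. Qed.

Lemma overruled_snoc_hidden f hist x :
  overruled f (hist ++ [(x, None)]) =
  overruled f hist + Nat.b2n (holds (consistent hist f /\ f x = true)).
Proof. unfold overruled; rewrite overruled_from_snoc; reflexivity. Qed.

Lemma overruled_le_snoc f hist x o : overruled f hist <= overruled f (hist ++ [(x, o)]).
Proof. unfold overruled; rewrite overruled_from_snoc; lia. Qed.

Definition discarded (hist : history X) (f : X -> bool) : Prop :=
  k <= overruled f hist /\ ~ consistent hist f.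

Lemma discarded_snoc hist x o f : discarded hist f -> discarded (hist ++ [(x, o)]) f.
Proof.
  intros [Hk Hc]; split.
  - eapply Nat.le_trans; [exact Hk | apply overruled_le_snoc].
  - intros Hc'; apply Hc, (consistent_of_snoc _ _ _ _ Hc').
Qed.

Lemma not_predicts_one hist x f :
  ~ predicts_one hist x -> consistent hist f -> f x = true ->
  ~ subsingleton (fun g => consistent hist g /\ g x = false) /\ overruled f hist < k.
Proof.
  intros Hnp Hf Hfx; split.
  - intros Hsub; apply Hnp; exists f; auto.
  - apply Nat.nle_gt; intros Hk; apply Hnp; exists f; auto.
Qed.

Variable target : X -> bool.
Hypothesis target_in : H target.

Local Notation generated := (generated X trusting_learner target).

Lemma generated_consistent F : generated F -> consistent F target.
Proof.
  induction 1 as [|hist x _ IH]; [split; [exact target_in | intros ? ? []]|].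
  destruct (trusting_learner hist x);
    [apply consistent_snoc_revealed | apply consistent_snoc_hidden]; auto.
Qed.

Lemma overruled_target F :
  generated F -> overruled target F = length (filter (false_negative X target) F).
Proof.
  induction 1 as [|hist x Hgen IH]; [reflexivity|].
  rewrite filter_app, length_app, <- IH.
  destruct (trusting_learner hist x).
  - rewrite overruled_snoc_revealed; simpl; lia.
  - rewrite overruled_snoc_hidden; cbn [filter false_negative fst snd].
    pose proof (generated_consistent hist Hgen) as Hc.
    destruct (holdsP (consistent hist target /\ target x = true)) as [[_ ->]|Hn];
      [reflexivity|].
    destruct (target x); [tauto | reflexivity].
Qed.

Lemma overruled_target_le F : generated F -> overruled target F <= k.
Proof.
  induction 1 as [|hist x Hgen IH]; [apply Nat.le_0_l|].
  unfold trusting_learner; destruct (holdsP (predicts_one hist x)) as [_|Hnp].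
  - rewrite overruled_snoc_revealed; exact IH.
  - rewrite overruled_snoc_hidden.
    destruct (holdsP (consistent hist target /\ target x = true)) as [[Hc Hx]|]; simpl; [|lia].
    destruct (not_predicts_one hist x target Hnp Hc Hx); lia.
Qed.

(* A false positive either discards the trusted hypothesis, which had been
   overruled k times, or happens when at most one consistent hypothesis
   labels x with 0; then only the target survives and no mistake follows. *)
Definition false_positives_charged (hist : history X) : Prop :=
  exists L, NoDup L /\ (forall f, In f L -> discarded hist f) /\
    (length (filter (false_positive X) hist) = length L \/
     (length (filter (false_positive X) hist) = 1 + length L /\
      forall g, consistent hist g -> g = target)).

Lemma false_positives_charged_snoc hist x o :
  false_positive X (x, o) = false ->
  false_positives_charged hist -> false_positives_charged (hist ++ [(x, o)]).
Proof.
  intros Ho [L [HL [Hdisc Hfp]]]; exists L; split; [exact HL|]; split.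
  - intros f Hf; apply discarded_snoc, Hdisc, Hf.
  - rewrite filter_app, length_app; simpl; rewrite Ho; simpl.
    destruct Hfp as [|[? Hsing]]; [left; lia | right; split; [lia|]].
    intros g Hg; apply Hsing, (consistent_of_snoc _ _ _ _ Hg).
Qed.

Lemma generated_false_positives_charged F : generated F -> false_positives_charged F.
Proof.
  induction 1 as [|hist x Hgen IH].
  { exists []; split; [constructor|]; split; [intros f []|left; reflexivity]. }
  pose proof (generated_consistent hist Hgen) as Hc.
  unfold trusting_learner; destruct (holdsP (predicts_one hist x)) as [Hp|_].
  2: { apply false_positives_charged_snoc; auto. }
  destruct (target x) eqn:Htx; [apply false_positives_charged_snoc; auto|].
  destruct IH as [L [HL [Hdisc Hfp]]], Hp as [f [Hf [Hfx Hwhy]]].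
  destruct Hfp as [Hfp|[_ Hsing]].
  2: { rewrite (Hsing f Hf) in Hfx; congruence. }
  unfold false_positives_charged; rewrite filter_app, length_app; simpl.
  destruct Hwhy as [Hsub|Hk].
  - exists L; split; [exact HL|]; split.
    + intros g Hg; apply discarded_snoc, Hdisc, Hg.
    + right; split; [lia|]; intros g Hg.
      apply consistent_snoc_revealed in Hg; apply Hsub; auto.
  - exists (f :: L); split; [|split].
    + constructor; [|exact HL]; intros Hin; apply (Hdisc f Hin), Hf.
    + intros g [<-|Hg]; [split|apply discarded_snoc, Hdisc, Hg].
      * eapply Nat.le_trans; [exact Hk | apply overruled_le_snoc].
      * rewrite consistent_snoc_revealed; intros [_ Hfx']; congruence.
    + left; simpl; lia.
Qed.

Hypothesis ldim_le1 : forall d tr, shatters H d tr -> d <= 1.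

Lemma sum_overruled_le M F :
  NoDup M -> generated F ->
  list_sum (map (fun f => overruled f F) M) <= length (filter (hidden X) F).
Proof.
  intros HM; induction 1 as [|hist x Hgen IH].
  { clear HM; induction M; simpl; auto. }
  rewrite filter_app, length_app.
  unfold trusting_learner; destruct (holdsP (predicts_one hist x)) as [_|Hnp].
  - rewrite (map_ext _ _ (fun f => overruled_snoc_revealed f hist x (target x))).
    simpl; lia.
  - rewrite (map_ext _ _ (fun f => overruled_snoc_hidden f hist x)), list_sum_map_add.
    enough (list_sum (map (fun f => Nat.b2n (holds (consistent hist f /\ f x = true))) M) <= 1)
      by (simpl; lia).
    apply list_sum_indicator_le_1; [exact HM|].
    intros f1 f2 [Hf1 Hx1] Hf2.
    apply (positives_subsingleton X H ldim_le1 (consistent hist) x); auto.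
    + intros g Hg; apply Hg.
    + apply (not_predicts_one hist x f1 Hnp Hf1 Hx1).
Qed.

Lemma generated_mistakes_le F :
  generated F -> exists n, (k + 1) * n <= k * k + length F /\
    length (filter (false_negative X target) F) + length (filter (false_positive X) F)
      <= 1 + n.
Proof.
  intros HF; destruct (generated_false_positives_charged F HF) as [L [HL [Hdisc Hfp]]].
  assert (Hnotin : ~ In target L).
  { intros Hin; apply (Hdisc target Hin), generated_consistent, HF. }
  pose proof (sum_overruled_le (target :: L) F (NoDup_cons _ Hnotin HL) HF) as Hsum.
  pose proof (list_sum_map_ge k (fun f => overruled f F) L
    (fun f Hf => proj1 (Hdisc f Hf))) as Hdiscarded.
  pose proof (overruled_target_le F HF) as Htarget_le.
  pose proof (overruled_target F HF) as Htarget.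
  pose proof (hidden_false_positive_le X F) as Hrounds.
  simpl in Hsum.
  exists (overruled target F + length L); split; nia.
Qed.

End Learner.

Theorem theorem5 (X : Type) (H : hclass X) :
  ldim_eq H 1 ->
  forall T : nat, exists A : learner X,
    forall s : list (X * bool), length s = T -> realizable H s ->
      (INR (mistakes A s) <= 1 + 2 * sqrt (INR T))%R.
Proof.
  intros [_ ldim_le1] T; exists (trusting_learner X H (Nat.sqrt T)).
  intros s Hlen [target [Htarget Hs]].
  destruct (mistakes_from_generated X (trusting_learner X H (Nat.sqrt T)) target [] s
    (generated_nil _ _ _) Hs) as [F [HF [HlenF Hmis]]].
  destruct (generated_mistakes_le X H (Nat.sqrt T) target Htarget ldim_le1 F HF)
    as [n [Hn Hmis_n]].
  simpl in HlenF, Hmis; rewrite HlenF, Hlen in Hn.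
  assert (Hmistakes : mistakes (trusting_learner X H (Nat.sqrt T)) s <= 1 + n)
    by (unfold mistakes; lia).
  apply le_INR in Hmistakes; rewrite plus_INR in Hmistakes.
  pose proof (le_two_sqrt T n Hn); simpl in Hmistakes; lra.
Qed.
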